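(* Let $\mathcal{C}$ be a linear $[n,k]$ code over a finite field $\mathbb{F}_q$ with all-symbol locality $r$, whose distinct recovery sets are $L_1,\dots,L_m$, and suppose $\mathcal{C}$ is a PMR code with respect to the admissible puncturing pattern $e=\{e_1,\dots,e_m\}$. After reordering coordinates so that $e_i=i$ for $i=1,\dots,m$, and writing $k_0=n-m$ and $\Delta=n-k-m$, the code $\mathcal{C}$ has a parity-check matrix of the form $$H=\begin{bmatrix} I_m & F\\ 0 & H_{\mathrm{MDS}}\end{bmatrix},$$ where $F$ is an $m\times k_0$ matrix, $H_{\mathrm{MDS}}$ is a $\Delta\times k_0$ matrix that is a parity-check matrix of a $[k_0,k_0-\Delta]$ MDS code, and the $i$-th row $\underline{x}_i^t$ of $F$ has Hamming weight at most $r$ for every $i=1,\dots,m$.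
   Context: An $[n,k]$ linear code $\mathcal{C}$ has all-symbol locality $r$ if for every coordinate $i\in[n]$ the dual code $\mathcal{C}^\perp$ contains a codeword whose support $L_i$ satisfies $i\in L_i$ and $|L_i|\le r+1$; $L_i$ is the recovery set of coordinate $i$, and it is assumed that $L_i\not\subset\bigcup_{j\ne i}L_j$. Such a code with minimum distance $d$ is said to be optimal if $d=(n-k+1)-(\lceil k/r\rceil-1)$. With distinct recovery sets $L_1,\dots,L_m$, a set $e=\{e_1,\dots,e_m\}$ is an admissible puncturing pattern if $e_i\in L_i\setminus\bigcup_{j\in[m],j\neq i}L_j$ for all $i$. A PMR (partially maximally recoverable) code is an optimal all-symbol locality code which becomes an MDS code upon puncturing the coordinates of some admissible puncturing pattern. *)

From HB Require Import structures.
From mathcomp Require Import all_boot all_order all_algebra all_fingroup.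
Set Implicit Arguments. Unset Strict Implicit. Unset Printing Implicit Defensive.
Import GRing.Theory.
Local Open Scope ring_scope.

(* A linear [n,k] code over a field F is represented by a full-row-rank
   generator matrix C : 'M_(k, n); its codewords are the row vectors c with
   (c <= C)%MS.  Dual codewords are the h with C *m h^T = 0. *)
Section Codes.
Variable F : fieldType.

Definition supp n (v : 'rV[F]_n) : {set 'I_n} := [set j | v 0 j != 0].
Definition wt n (v : 'rV[F]_n) : nat := #|supp v|.

Definition min_dist_is k n (C : 'M[F]_(k, n)) (d : nat) : Prop :=
  (exists c : 'rV[F]_n, (c <= C)%MS /\ c != 0 /\ wt c = d) /\
  (forall c : 'rV[F]_n, (c <= C)%MS -> c != 0 -> (d <= wt c)%N).

Definition is_MDS k n (C : 'M[F]_(k, n)) : Prop :=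
  min_dist_is C (n - \rank C + 1)%N.

Definition parity_check k n p (C : 'M[F]_(k, n)) (H : 'M[F]_(p, n)) : Prop :=
  C *m H^T = 0 /\ (\rank C + \rank H)%N = n.

Definition MDS_parity_check p N (H : 'M[F]_(p, N)) (K : nat) : Prop :=
  exists D : 'M[F]_(K, N), row_free D /\ parity_check D H /\ is_MDS D.

Definition all_symbol_locality k n m (C : 'M[F]_(k, n)) (r : nat)
    (L : 'I_m -> {set 'I_n}) : Prop :=
  [/\ injective L,
      (forall j, exists h : 'rV[F]_n, C *m h^T = 0 /\ supp h = L j),
      (forall j, (#|L j| <= r.+1)%N),
      (forall i : 'I_n, exists j, i \in L j) &
      (forall j, ~~ (L j \subset \bigcup_(j' | j' != j) L j'))].

Definition optimal_LRC k n (C : 'M[F]_(k, n)) (r : nat) : Prop :=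
  exists d : nat, min_dist_is C d /\
    d = ((n - k + 1) - ((k + r.-1) %/ r).-1)%N.

Definition admissible n m (L : 'I_m -> {set 'I_n}) (e : 'I_m -> 'I_n) : Prop :=
  forall i, e i \in L i :\: \bigcup_(j | j != i) L j.

(* delete the coordinates in E (remaining coordinates kept in increasing order) *)
Definition puncture k n (C : 'M[F]_(k, n)) (E : {set 'I_n}) : 'M[F]_(k, #|~: E|) :=
  \matrix_(i, j) C i (@enum_val _ (mem (~: E)) j).

Definition PMR_wrt k n m (C : 'M[F]_(k, n)) (r : nat)
    (L : 'I_m -> {set 'I_n}) (e : 'I_m -> 'I_n) : Prop :=
  [/\ all_symbol_locality C r L, optimal_LRC C r, admissible L e &
      is_MDS (puncture C [set e i | i in 'I_m])].

End Codes.

From HB Require Import structures.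
From mathcomp Require Import all_boot all_order all_algebra all_fingroup.
From mathcomp Require Import zify.
Set Implicit Arguments. Unset Strict Implicit. Unset Printing Implicit Defensive.
Import GRing.Theory.
Local Open Scope ring_scope.

(* Scale the dual codeword supported on L_i so that it equals 1 at e_i; by
   admissibility it vanishes at every e_j with j <> i.  After moving the e_i to
   the front these m checks form [I | F], and row i of F is supported on
   L_i minus e_i, so it has weight at most r.  Any generator [C_l | C_r] of the
   reordered code is orthogonal to [I | F], hence C_l = - C_r F^T: the code is
   spanned by C_r [- F^T | I], so C_r has full rank k and is, up to reordering
   its columns, the punctured code, which is MDS.  A parity-check matrix H_MDS
   of C_r completes [I F; 0 H_MDS] to a parity-check matrix of the code, by a
   rank count. *)

Lemma colsub_submx (F : fieldType) k p N N' (g : 'I_N' -> 'I_N)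
    (A : 'M[F]_(k, N)) (B : 'M[F]_(p, N)) :
  (A <= B)%MS -> (colsub g A <= colsub g B)%MS.
Proof. by move=> sAB; rewrite -[A]mulmx1 -[B]mulmx1 -!mulmx_colsub submxMr. Qed.

Lemma mxrank_colsub_le (F : fieldType) k N N' (g : 'I_N' -> 'I_N) (A : 'M[F]_(k, N)) :
  (\rank (colsub g A) <= \rank A)%N.
Proof. by rewrite -{1}[A]mulmx1 -mulmx_colsub mxrankM_maxl. Qed.

Section ColumnReindexing.
Variables (F : fieldType) (N1 N2 : nat) (phi : 'I_N2 -> 'I_N1) (psi : 'I_N1 -> 'I_N2).
Hypotheses (phiK : cancel phi psi) (psiK : cancel psi phi).

Lemma colsubK k (A : 'M[F]_(k, N1)) : colsub psi (colsub phi A) = A.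
Proof. by apply/matrixP => i j; rewrite !mxE psiK. Qed.

Lemma mxrank_colsub k (A : 'M[F]_(k, N1)) : \rank (colsub phi A) = \rank A.
Proof.
by apply/eqP; rewrite eqn_leq mxrank_colsub_le -{1}(colsubK A) mxrank_colsub_le.
Qed.

Lemma colsub_eq0 k (A : 'M[F]_(k, N1)) : (colsub phi A == 0) = (A == 0).
Proof.
apply/eqP/eqP => [A0|->]; last by rewrite linear0.
by rewrite -(colsubK A) A0 linear0.
Qed.

Lemma wt_colsub (v : 'rV[F]_N1) : wt (colsub phi v) = wt v.
Proof.
rewrite /wt -(card_imset _ (can_inj phiK)); apply: eq_card => j.
by rewrite -{1}(psiK j) (mem_imset _ _ (can_inj phiK)) !inE mxE psiK.
Qed.

End ColumnReindexing.

Lemma is_MDS_colsub (F : fieldType) k N1 N2 (phi : 'I_N2 -> 'I_N1) (A : 'M[F]_(k, N1)) :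
  bijective phi -> is_MDS A -> is_MDS (colsub phi A).
Proof.
move=> bij_phi; have eN : N2 = N1 by have := bij_eq_card bij_phi; rewrite !card_ord.
case: bij_phi => psi phiK psiK; rewrite /is_MDS (mxrank_colsub psiK).
have -> : (N2 - \rank A + 1 = N1 - \rank A + 1)%N by rewrite eN.
case=> [[c [cA [c0 wc]]] minA]; split.
  exists (colsub phi c).
  by rewrite colsub_submx // (colsub_eq0 psiK) (wt_colsub phiK psiK).
move=> c1 c1A c10; rewrite -(wt_colsub psiK phiK); apply: minA.
  by rewrite -(colsubK psiK A) colsub_submx.
by rewrite (colsub_eq0 phiK).
Qed.

Lemma exists_parity_check (F : fieldType) k N p (A : 'M[F]_(k, N)) :
  (\rank A + p)%N = N -> exists H : 'M[F]_(p, N), A *m H^T = 0 /\ \rank H = p.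
Proof.
move=> rkAp; have -> : p = \rank (kermx A^T) by rewrite mxrank_ker mxrank_tr -{1}rkAp addKn.
exists (row_base (kermx A^T)); rewrite (eq_row_base _); split=> //.
by apply: trmx_inj; rewrite trmx_mul trmxK trmx0; apply/sub_kermxP; rewrite eq_row_base.
Qed.

Lemma mul_col_perm_tr (R : comPzRingType) m p n (s : 'S_n)
    (A : 'M[R]_(m, n)) (B : 'M[R]_(p, n)) :
  col_perm s A *m (col_perm s B)^T = A *m B^T.
Proof.
by rewrite !col_permE trmx_mul tr_perm_mx mulmxA -(mulmxA A) -perm_mxM mulgV perm_mx1 mulmx1.
Qed.

Lemma mxrank_block_unit (F : fieldType) m n p (B : 'M[F]_(m, n)) (D : 'M[F]_(p, n)) :
  \rank (block_mx 1%:M B 0 D) = (m + \rank D)%N.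
Proof.
have unitU : row_free (block_mx (1%:M : 'M[F]_m) (- B) 0 (1%:M : 'M_n)).
  by rewrite row_free_unit unitmxE det_ublock !det1 mulr1 unitr1.
rewrite -(mxrankMfree _ unitU) mulmx_block !mulmx1 !mul1mx !mulmx0 !mul0mx !addr0 add0r.
by rewrite addNr rank_diag_block_mx mxrank1.
Qed.

Section Systematic.
Variables (F : fieldType) (k m k0 : nat) (C : 'M[F]_(k, m + k0)) (B : 'M[F]_(m, k0)).
Hypothesis dual_C : C *m (row_mx 1%:M B)^T = 0.

Lemma lsubmx_systematic : lsubmx C = - (rsubmx C *m B^T).
Proof.
apply/eqP; rewrite -addr_eq0; move/eqP: dual_C.
by rewrite -{1}[C]hsubmxK tr_row_mx trmx1 mul_row_col mulmx1.
Qed.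

Lemma systematic_factor : C = rsubmx C *m row_mx (- B^T) 1%:M.
Proof. by rewrite mul_mx_row mulmxN mulmx1 -lsubmx_systematic hsubmxK. Qed.

Lemma mxrank_rsubmx_systematic : \rank (rsubmx C) = \rank C.
Proof.
apply/eqP; rewrite eqn_leq -{1}[C]mulmx1 -mulmx_rsub mxrankM_maxl /=.
by rewrite {1}systematic_factor mxrankM_maxl.
Qed.

Lemma parity_check_systematic p (D : 'M[F]_(p, k0)) :
  rsubmx C *m D^T = 0 -> (\rank C + \rank D)%N = k0 ->
  parity_check C (block_mx 1%:M B 0 D).
Proof.
move=> dual_D rkCD; split; last by rewrite mxrank_block_unit; lia.
rewrite tr_block_mx -[C in LHS]hsubmxK mul_row_block lsubmx_systematic dual_D.
by rewrite trmx1 trmx0 mulmx1 mulmx0 addNr add0r row_mx0.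
Qed.

End Systematic.

Lemma is_MDS_rsubmx_col_perm (F : fieldType) k m k0 (s : 'S_(m + k0))
    (C : 'M[F]_(k, m + k0)) :
  is_MDS (puncture C [set s (lshift k0 i) | i in 'I_m]) ->
  is_MDS (rsubmx (col_perm s C)).
Proof.
set E := [set _ | i in _].
have sr_notin b : s (rshift m b) \in ~: E.
  by rewrite inE; apply/imsetP => -[i _ /perm_inj /eqP]; rewrite eq_sym eq_lrshift.
pose phi b := enum_rank_in (sr_notin b) (s (rshift m b)).
have phiE b : enum_val (phi b) = s (rshift m b) by apply: enum_rankK_in.
have phi_inj : injective phi.
  by move=> b1 b2 /(congr1 enum_val); rewrite !phiE => /perm_inj /rshift_inj.
have card_notE : #|~: E| = k0.
  have := cardsC E; rewrite card_imset ?card_ord; first lia.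
  by move=> i j /perm_inj /lshift_inj.
have phi_bij : bijective phi by apply: inj_card_bij => //; rewrite !card_ord card_notE.
have -> : rsubmx (col_perm s C) = colsub phi (puncture C E).
  by apply/matrixP => a b; rewrite !mxE phiE.
exact: is_MDS_colsub.
Qed.

Section NormalizedChecks.
Variables (F : fieldType) (n m : nat) (L : 'I_m -> {set 'I_n}) (e : 'I_m -> 'I_n).
Hypothesis e_adm : admissible L e.

Lemma admissible_memE i j : (e i \in L j) = (i == j).
Proof.
have /setDP [eL e_priv] := e_adm i.
case: eqVneq => [<- // | ij]; apply: contraNF e_priv => ej.
by apply/bigcupP; exists j; rewrite // eq_sym.
Qed.

Variable h : 'I_m -> 'rV[F]_n.
Hypothesis supp_h : forall j, supp (h j) = L j.

Definition normalized_checks : 'M[F]_(m, n) := \matrix_j ((h j 0 (e j))^-1 *: h j).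

Lemma pivot_neq0 j : h j 0 (e j) != 0.
Proof. by have := admissible_memE j j; rewrite eqxx -supp_h inE. Qed.

Lemma normalized_checks_eq0 j b : (normalized_checks j b == 0) = (b \notin L j).
Proof. by rewrite !mxE mulf_eq0 invr_eq0 (negbTE (pivot_neq0 j)) -supp_h inE negbK. Qed.

Lemma normalized_checks_e i j : normalized_checks i (e j) = (i == j)%:R.
Proof.
case: eqVneq => [<- | ij]; first by rewrite !mxE mulVf ?pivot_neq0.
by apply/eqP; rewrite normalized_checks_eq0 admissible_memE eq_sym (negbTE ij).
Qed.

Lemma dual_normalized_checks k (C : 'M[F]_(k, n)) :
  (forall j, C *m (h j)^T = 0) -> C *m normalized_checks^T = 0.
Proof.
move=> dual_h; apply: trmx_inj; rewrite trmx_mul trmxK trmx0.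
apply/row_matrixP => j; rewrite row_mul rowK row0 -scalemxAl.
by rewrite -[h j *m C^T]trmxK trmx_mul trmxK dual_h trmx0 scaler0.
Qed.

Lemma wt_colsub_normalized_check p (g : 'I_p -> 'I_n) i :
  injective g -> (forall b, g b != e i) ->
  (wt (colsub g (row i normalized_checks)) < #|L i|)%N.
Proof.
move=> g_inj g_ne; rewrite /wt -(card_imset _ g_inj) [#|L i|](cardsD1 (e i)).
rewrite admissible_memE eqxx ltnS subset_leq_card //; apply/subsetP => _ /imsetP [b + ->].
by rewrite !inE g_ne !mxE mulf_eq0 negb_or => /andP [_]; rewrite -supp_h inE.
Qed.

End NormalizedChecks.

Theorem theorem1 (Fq : finFieldType) (m k0 k r : nat)
  (C : 'M[Fq]_(k, m + k0)) (L : 'I_m -> {set 'I_(m + k0)})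
  (e : 'I_m -> 'I_(m + k0)) :
  row_free C -> (0 < r)%N ->
  PMR_wrt C r L e ->
  forall s : 'S_(m + k0), (forall i : 'I_m, s (lshift k0 i) = e i) ->
  exists (Fm : 'M[Fq]_(m, k0)) (HMDS : 'M[Fq]_(m + k0 - k - m, k0)),
    [/\ parity_check (col_perm s C) (block_mx 1%:M Fm 0 HMDS),
        (forall i : 'I_m, (wt (row i Fm) <= r)%N) &
        MDS_parity_check HMDS (k0 - (m + k0 - k - m))].
Proof.
move=> free_C _ [[_ dual_L card_L _ _] _ e_adm MDS_punct] s se.
have [h /all_and2 [dual_h supp_h]] := fin_all_exists dual_L.
pose G := col_perm s (normalized_checks e h).
have G_id : lsubmx G = 1%:M.
  apply/matrixP => i j.
  by rewrite [LHS]mxE [LHS]mxE se (normalized_checks_e e_adm supp_h) mxE.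
pose Fm := rsubmx G.
have dual_C : col_perm s C *m (row_mx 1%:M Fm)^T = 0.
  by rewrite -G_id hsubmxK mul_col_perm_tr dual_normalized_checks.
pose Cr := rsubmx (col_perm s C).
have rk_Cs : \rank (col_perm s C) = k.
  by rewrite col_permEsub (mxrank_colsub (permKV s)); apply/eqP.
have rk_Cr : \rank Cr = k by rewrite (mxrank_rsubmx_systematic dual_C).
have k_le_k0 : (k <= k0)%N by rewrite -rk_Cr rank_leq_col.
have [HMDS [dual_HMDS rk_HMDS]] :
    exists HMDS : 'M_(m + k0 - k - m, k0),
      Cr *m HMDS^T = 0 /\ \rank HMDS = (m + k0 - k - m)%N.
  by apply: exists_parity_check; rewrite rk_Cr; lia.
exists Fm, HMDS; split.
- by apply: parity_check_systematic; rewrite // rk_Cs rk_HMDS; lia.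
- move=> i; rewrite -ltnS (leq_trans _ (card_L i)) //.
  have -> : row i Fm = colsub (fun b => s (rshift m b)) (row i (normalized_checks e h)).
    by apply/matrixP => ? b; rewrite !mxE.
  apply: (wt_colsub_normalized_check e_adm supp_h) => [b1 b2 /perm_inj /rshift_inj //|b].
  by rewrite -se (inj_eq perm_inj) eq_sym eq_lrshift.
- have -> : (k0 - (m + k0 - k - m) = k)%N by lia.
  exists Cr; split; first exact/eqP.
  split; last by apply: is_MDS_rsubmx_col_perm; rewrite (eq_imset _ se).
  by split=> //; rewrite rk_Cr rk_HMDS; lia.
Qed.
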